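(* Let $N=\{1,\dots,n\}$, $\eta>0$, integers $B\ge1$, $Q\ge1$. Let $(A(k))_{k\ge0}$ be $n\times n$ matrices, let $x(0)\in\mathbb{R}^n$ have all components multiples of $1/Q$, and define componentwise $x_i(k+1)=\lfloor\sum_{j=1}^na_{ij}(k)x_j(k)\rfloor$, where $\lfloor\cdot\rfloor$ is rounding down to the nearest multiple of $1/Q$. Assume: (i) each $A(k)$ is doubly stochastic with positive diagonal entries and all positive entries at least $\eta$; (ii) for every integer $k\ge0$, every permutation $\sigma$ of $N$ with $x_{\sigma(1)}(kB)\ge\cdots\ge x_{\sigma(n)}(kB)$, and every $d\in\{1,\dots,n-1\}$, either $x_{\sigma(d)}(kB)=x_{\sigma(d+1)}(kB)$, or there exist $t\in\{kB,\dots,(k+1)B-1\}$, $i\in\{\sigma(1),\dots,\sigma(d)\}$, $j\in\{\sigma(d+1),\dots,\sigma(n)\}$ with $(i,j)$ or $(j,i)$ in $\mathcal{E}(A(t))$. Then for every integer $k\ge0$ and every permutation $\sigma$ of $N$ with $x_{\sigma(1)}(kB)\ge\cdots\ge x_{\sigma(n)}(kB)$, \[\underline{V}(x(kB))-\underline{V}(x((k+1)B))\ge\frac\eta2\sum_{i=1}^{n-1}\big(x_{\sigma(i)}(kB)-x_{\sigma(i+1)}(kB)\big)^2.\]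
   Context: A matrix is doubly stochastic if it is nonnegative with all row and column sums equal to $1$. For a matrix $A=[a_{ij}]$, $\mathcal{E}(A)$ is the set of directed edges $(j,i)$ (including self-edges) with $a_{ij}>0$. For $x\in\mathbb{R}^n$, $m(x)=\min_ix_i$ and $\underline{V}(x)=\sum_{i=1}^n(x_i-m(x))^2$. *)

From HB Require Import structures.
From mathcomp Require Import all_boot all_order all_fingroup all_algebra.
From mathcomp Require Import reals.
Set Implicit Arguments. Unset Strict Implicit. Unset Printing Implicit Defensive.
Import Order.TTheory GRing.Theory Num.Theory.
Local Open Scope ring_scope.

(* Index set N = {1..n} is represented by 'I_n = {0..n-1}. *)

Definition qfloor (R : realType) (Q : nat) (y : R) : R :=
  (Num.floor (y * Q%:R))%:~R / Q%:R.

Definition doubly_stochastic (R : realType) (n : nat) (A : 'M[R]_n) : Prop :=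
  (forall i j, 0 <= A i j) /\
  (forall i, \sum_j A i j = 1) /\
  (forall j, \sum_i A i j = 1).

Definition in_edges (R : realType) (n : nat) (A : 'M[R]_n) (e : 'I_n * 'I_n) : Prop :=
  0 < A e.2 e.1.

(* m(x) = min_i x_i (the default value is irrelevant when n > 0) *)
Definition mmin (R : realType) (n : nat) (x : 'I_n -> R) : R :=
  \big[Num.min/head 0 [seq x i | i <- enum 'I_n]]_(i < n) x i.

Definition Vlow (R : realType) (n : nat) (x : 'I_n -> R) : R :=
  \sum_(i < n) (x i - mmin x) ^+ 2.

Definition sorted_by (R : realType) (n : nat) (x : 'I_n -> R) (s : 'S_n) : Prop :=
  forall p q : 'I_n, (p <= q)%N -> x (s q) <= x (s p).

From HB Require Import structures.
From mathcomp Require Import all_boot all_order all_fingroup all_algebra.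
From mathcomp Require Import reals.
From mathcomp Require Import ring lra.
Import Order.TTheory GRing.Theory Num.Theory.
Set Implicit Arguments. Unset Strict Implicit. Unset Printing Implicit Defensive.
Local Open Scope ring_scope.

(* Each step lowers V by at least the total dispersion sum_i sum_j a_ij (x_j - y_i)^2
   around the averages y = A x: rounding down cannot push an entry below m(x), since
   m(x) is itself on the grid.  Row i sees all values between the smallest and the
   largest entry of its neighbourhood, and contributes at least eta/2 times the
   square of that range.  Call the gap between the d-th and (d+1)-th largest entries
   of x(kB) a cut; by (ii) every nonzero cut is crossed by an edge during the window.
   Until it is first crossed, the top side of a cut stays above it and the bottom
   side below it, so every row witnessing that first crossing has a range containing
   the gap.  The gaps charged to one row are disjoint subintervals of its range, so
   their squares sum to at most the square of the range. *)

Definition on_grid (R : realType) (Q : nat) (y : R) : Prop :=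
  exists z : int, y = z%:~R / Q%:R.

Lemma qfloor_on_grid (R : realType) (Q : nat) (y : R) : on_grid Q (qfloor Q y).
Proof. by rewrite /qfloor; eexists. Qed.

Lemma qfloor_le (R : realType) (Q : nat) (y : R) : (0 < Q)%N -> qfloor Q y <= y.
Proof. by move=> Q_gt0; rewrite /qfloor ler_pdivrMr ?ltr0n // floor_le. Qed.

Lemma qfloor_ge_grid (R : realType) (Q : nat) (c y : R) :
  (0 < Q)%N -> on_grid Q c -> c <= y -> c <= qfloor Q y.
Proof.
move=> Q_gt0 [z ->]; rewrite /qfloor ler_pdivrMr ?ltr0n // => zy.
by rewrite ler_pM2r ?invr_gt0 ?ltr0n // ler_int floor_ge_int.
Qed.

Section WeightedAverage.
Variables (R : realType) (I : finType) (w : I -> R).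
Hypotheses (w_ge0 : forall j, 0 <= w j) (w_sum1 : \sum_j w j = 1).

Lemma avg_ge (c : R) (y : I -> R) :
  (forall j, 0 < w j -> c <= y j) -> c <= \sum_j w j * y j.
Proof.
move=> c_le; rewrite -[c]mul1r -w_sum1 mulr_suml; apply: ler_sum => j _.
have := w_ge0 j; rewrite le_eqVlt => /orP [/eqP <-|wj]; first by rewrite !mul0r.
by rewrite ler_pM2l // c_le.
Qed.

Lemma avg_le (c : R) (y : I -> R) :
  (forall j, 0 < w j -> y j <= c) -> \sum_j w j * y j <= c.
Proof.
move=> le_c; rewrite -[c]mul1r -w_sum1 mulr_suml; apply: ler_sum => j _.
have := w_ge0 j; rewrite le_eqVlt => /orP [/eqP <-|wj]; first by rewrite !mul0r.
by rewrite ler_pM2l // le_c.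
Qed.

Lemma sum_sq_dev_avg (c : R) (y : I -> R) :
  \sum_j w j * (y j - \sum_l w l * y l) ^+ 2 =
  \sum_j w j * (y j - c) ^+ 2 - (\sum_l w l * y l - c) ^+ 2.
Proof.
set m := \sum_l w l * y l.
have expand j : w j * (y j - m) ^+ 2 = w j * (y j - c) ^+ 2 +
    ((-2 * (m - c)) * (w j * y j) + ((m - c) ^+ 2 + 2 * (m - c) * c) * w j).
  by ring.
rewrite (eq_bigr _ (fun j _ => expand j)) !big_split /= -!mulr_sumr w_sum1 -/m.
ring.
Qed.

Lemma sum_sq_dev_ge_gap (eta u : R) (y : I -> R) a b :
  0 <= eta -> eta <= w a -> eta <= w b ->
  eta / 2 * (y a - y b) ^+ 2 <= \sum_j w j * (y j - u) ^+ 2.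
Proof.
move=> eta_ge0 eta_a eta_b.
have term_ge0 j : 0 <= w j * (y j - u) ^+ 2 by rewrite mulr_ge0 ?sqr_ge0.
have [<-|nab] := eqVneq a b.
  by rewrite subrr expr0n /= mulr0 sumr_ge0.
rewrite (bigD1 a) //= (bigD1 b) /=; last by rewrite eq_sym nab.
have rest_ge0 : 0 <= \sum_(j | (j != a) && (j != b)) w j * (y j - u) ^+ 2.
  exact: sumr_ge0.
have sa : eta * (y a - u) ^+ 2 <= w a * (y a - u) ^+ 2 by apply: ler_wpM2r; rewrite ?sqr_ge0.
have sb : eta * (y b - u) ^+ 2 <= w b * (y b - u) ^+ 2 by apply: ler_wpM2r; rewrite ?sqr_ge0.
have mid_ge0 : 0 <= eta * (y a + y b - 2 * u) ^+ 2 by rewrite mulr_ge0 ?sqr_ge0.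
have -> : eta / 2 * (y a - y b) ^+ 2 =
    eta * (y a - u) ^+ 2 + eta * (y b - u) ^+ 2 - eta * (y a + y b - 2 * u) ^+ 2 / 2.
  by field.
lra.
Qed.

End WeightedAverage.

Definition dispersion (R : realType) (n : nat) (A : 'M[R]_n) (y : 'I_n -> R) : R :=
  \sum_i \sum_j A i j * (y j - \sum_l A i l * y l) ^+ 2.

Lemma mmin_le (R : realType) (n : nat) (y : 'I_n -> R) i : mmin y <= y i.
Proof. exact: bigmin_le. Qed.

Lemma mmin_attained (R : realType) (n : nat) (y : 'I_n -> R) (i0 : 'I_n) :
  exists i, mmin y = y i.
Proof.
case: (arg_minP y (isT : predT i0)) => i _ i_min; exists i.
apply/le_anti; rewrite mmin_le /=; apply: le_bigmin => [|j _]; last exact: i_min.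
case E: (enum 'I_n) => [|j s] /=; last exact: i_min.
by have := mem_enum 'I_n i0; rewrite E.
Qed.

Lemma Vlow_quantized_step (R : realType) (n Q : nat) (A : 'M[R]_n) (y z : 'I_n -> R) :
  (0 < Q)%N -> doubly_stochastic A -> (forall i, on_grid Q (y i)) ->
  (forall i, z i = qfloor Q (\sum_j A i j * y j)) ->
  dispersion A y <= Vlow y - Vlow z.
Proof.
case: n A y z => [|n] A y z Q_gt0 [A_ge0 [A_row A_col]] y_grid z_def.
  by rewrite /dispersion /Vlow !big_ord0 subrr.
set c := mmin y; have [ic c_def] := mmin_attained y ord0.
have c_le_z i : c <= z i.
  rewrite z_def; apply: qfloor_ge_grid => //; first by rewrite /c c_def.
  by apply: (avg_ge (A_ge0 i) (A_row i)) => j _; apply: mmin_le.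
have z_le_avg i : z i <= \sum_j A i j * y j by rewrite z_def qfloor_le.
have c_le_mz : c <= mmin z by have [j ->] := mmin_attained z ord0.
have Vz_le : Vlow z <= \sum_i (\sum_j A i j * y j - c) ^+ 2.
  apply: ler_sum => i _; have := mmin_le z i; have := c_le_z i; have := z_le_avg i.
  nra.
suff : \sum_i (\sum_j A i j * y j - c) ^+ 2 = Vlow y - dispersion A y by lra.
rewrite /dispersion (eq_bigr _ (fun i _ => sum_sq_dev_avg (A_row i) c y)).
rewrite sumrB exchange_big /=.
have -> : \sum_j \sum_i A i j * (y j - c) ^+ 2 = Vlow y.
  by apply: eq_bigr => j _; rewrite -mulr_suml A_col mul1r.
ring.
Qed.

Lemma sum_gaps_within_le (R : realType) (w : nat -> R) (lo hi : R) (N : nat) :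
  lo <= hi -> (forall d, (d < N)%N -> w d.+1 <= w d) ->
  \sum_(d < N) (if (lo <= w d.+1) && (w d <= hi) then w d - w d.+1 else 0) <= hi - lo.
Proof.
move=> lo_hi w_dec; pose clamp y := Num.max lo (Num.min y hi).
have clamp_mono y y' : y <= y' -> clamp y <= clamp y'.
  by move=> yy'; rewrite le_max2 ?le_min2.
have clamp_id y : lo <= y <= hi -> clamp y = y.
  by case/andP => lo_y y_hi; rewrite /clamp min_l // max_r.
have clamp_range y : lo <= clamp y <= hi.
  by rewrite le_max lexx /= ge_max lo_hi ge_min lexx orbT.
apply: (@le_trans _ _ (\sum_(d < N) (clamp (w d) - clamp (w d.+1)))).
  apply: ler_sum => d _; case: ifP => [/andP [lo_w w_hi]|_].
    have w_dd := w_dec d (ltn_ord d).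
    by rewrite !clamp_id ?lo_w ?w_hi ?(le_trans w_dd) ?(le_trans lo_w).
  by rewrite subr_ge0 clamp_mono ?w_dec.
rewrite -(big_mkord xpredT (fun d => clamp (w d) - clamp (w d.+1))).
rewrite (@telescope_sumr_eq _ 0 N (fun d => - clamp (w d))) // => [|d _]; last first.
  by rewrite opprK addrC.
by have := clamp_range (w 0%N); have := clamp_range (w N); lra.
Qed.

Lemma sum_succ_pairs (R : realType) (n : nat) (F : 'I_n.+1 -> 'I_n.+1 -> R) :
  \sum_(p < n.+1) \sum_(q < n.+1 | val q == (val p).+1) F p q =
  \sum_(d < n) F (inord d) (inord d.+1).
Proof.
rewrite big_ord_recr /= [X in _ + X]big_pred0 => [|q]; last first.
  by apply/negbTE; rewrite neq_ltn ltn_ord.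
rewrite addr0; apply: eq_bigr => p _.
have p_lt : (p < n)%N := ltn_ord p.
have -> : widen_ord (leqnSn n) p = inord p.
  by apply: val_inj; rewrite /= inordK // ltnW.
by apply: big_pred1 => q /=; rewrite -val_eqE /= !inordK // ltnW.
Qed.

Lemma sum_sq_gaps_within_le (R : realType) (n : nat) (v : 'I_n -> R) (lo hi : R) :
  (forall p q : 'I_n, (p <= q)%N -> v q <= v p) -> lo <= hi ->
  \sum_(p < n) \sum_(q < n | val q == (val p).+1)
     (if (lo <= v q) && (v p <= hi) then (v p - v q) ^+ 2 else 0) <= (hi - lo) ^+ 2.
Proof.
move=> v_dec lo_hi.
have gaps_le : \sum_(p < n) \sum_(q < n | val q == (val p).+1)
    (if (lo <= v q) && (v p <= hi) then v p - v q else 0) <= hi - lo.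
  case: n v v_dec => [|n] v v_dec; first by rewrite big_ord0 subr_ge0.
  rewrite sum_succ_pairs.
  apply: (@sum_gaps_within_le R (fun d => v (inord d))) => // d d_lt.
  by apply: v_dec; rewrite /= !inordK // ltnW.
rewrite expr2; apply: le_trans (ler_wpM2l _ gaps_le); last by rewrite subr_ge0.
rewrite mulr_sumr; apply: ler_sum => p _; rewrite mulr_sumr; apply: ler_sum => q /eqP q_succ.
case: ifP => [/andP [lo_q p_hi]|_]; last by rewrite mulr0.
have : v q <= v p by apply: v_dec; rewrite q_succ.
nra.
Qed.

Definition first_hit (P : nat -> bool) (T0 t : nat) : bool :=
  P t && all (predC P) (index_iota T0 t).

Lemma first_hit_before (P : nat -> bool) (T0 t t' : nat) :
  first_hit P T0 t -> (T0 <= t' < t)%N -> ~~ P t'.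
Proof. by case/andP => _ /allP before t'_in; apply: before; rewrite mem_index_iota. Qed.

Lemma le_sum_first_hit (R : realType) (P : nat -> bool) (g : R) (T0 T1 : nat) :
  0 <= g -> (exists t, (T0 <= t < T1)%N && P t) ->
  g <= \sum_(T0 <= t < T1) (if first_hit P T0 t then g else 0).
Proof.
move=> g_ge0 [t /andP [t_in Pt]].
have hit : exists t, (T0 <= t)%N && P t by exists t; rewrite Pt (andP t_in).1.
case: (ex_minnP hit) => t0 /andP [T0_t0 Pt0] t0_min.
have t0_le : (t0 <= t)%N by rewrite t0_min // Pt (andP t_in).1.
have first : first_hit P T0 t0.
  rewrite /first_hit Pt0; apply/allP => t'; rewrite mem_index_iota => /andP [T0_t' t'_lt].
  by apply/negP => Pt'; have := t0_min t'; rewrite T0_t' Pt' leqNgt t'_lt => /(_ isT).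
rewrite (bigD1_seq t0) ?mem_index_iota ?iota_uniq //=; last first.
  by rewrite T0_t0 (leq_ltn_trans t0_le) ?(andP t_in).2.
by rewrite first lerDl sumr_ge0 // => t' _; case: ifP.
Qed.

Section Cuts.
Variables (R : realType) (n : nat).
Implicit Types (A : 'M[R]_n) (s : 'S_n) (X : 'I_n -> R).

(* Cut [p] of [s] separates the positions [0..p] from [p+1..n-1]. *)
Definition cut_separates s (p i j : 'I_n) : bool :=
  ((s^-1)%g i <= p)%N != ((s^-1)%g j <= p)%N.

Definition row_crosses_cut A s p i : bool :=
  [exists j, (0 < A i j) && cut_separates s p i j].

Definition crosses_cut A s p : bool := [exists i, row_crosses_cut A s p i].

Definition sq_gap X s (p : 'I_n) : R :=
  \sum_(q < n | val q == (val p).+1) (X (s p) - X (s q)) ^+ 2.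

Definition first_crossing (A : nat -> 'M[R]_n) s (T0 t : nat) (p : 'I_n) : bool :=
  first_hit (fun t' => crosses_cut (A t') s p) T0 t.

Lemma sq_gap_ge0 X s p : 0 <= sq_gap X s p.
Proof. by apply: sumr_ge0 => q _; apply: sqr_ge0. Qed.

Lemma edge_crosses_cut A s (d p q : 'I_n) :
  (p <= d < q)%N -> in_edges A (s p, s q) \/ in_edges A (s q, s p) ->
  crosses_cut A s d.
Proof.
case/andP => p_d d_q; rewrite /in_edges /= => edge.
have sides : cut_separates s d (s p) (s q) && cut_separates s d (s q) (s p).
  by rewrite /cut_separates !permK p_d [(q <= d)%N]leqNgt d_q.
case: edge => A_pos; apply/existsP.
  by exists (s q); apply/existsP; exists (s p); rewrite A_pos (andP sides).2.
by exists (s p); apply/existsP; exists (s q); rewrite A_pos (andP sides).1.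
Qed.

Lemma no_crossing_same_side A s p i j :
  ~~ crosses_cut A s p -> 0 < A i j -> ((s^-1)%g i <= p)%N = ((s^-1)%g j <= p)%N.
Proof.
move=> /existsPn /(_ i) /existsPn /(_ j) no_cross A_pos.
by move: no_cross; rewrite A_pos /cut_separates negbK => /eqP.
Qed.

Lemma sq_gap_eq0_or_crossed (A : nat -> 'M[R]_n) X s (T0 T1 : nat) (d : 'I_n) :
  (forall d' : 'I_n, val d' = (val d).+1 ->
     X (s d) = X (s d') \/
     exists t : nat, (T0 <= t)%N /\ (t < T1)%N /\
       exists p q : 'I_n, (p <= d)%N /\ (d < q)%N /\
         (in_edges (A t) (s p, s q) \/ in_edges (A t) (s q, s p))) ->
  sq_gap X s d = 0 \/ exists t, (T0 <= t < T1)%N && crosses_cut (A t) s d.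
Proof.
move=> connected; have [d_inner|d_last] := ltnP (val d).+1 n; last first.
  left; apply: big1 => q /eqP q_succ.
  by move: (ltn_ord q); rewrite q_succ ltnNge d_last.
case: (connected (Ordinal d_inner) erefl) => [gap0|[t [T0_t [t_T1 [p [q [pd [dq edge]]]]]]]].
  left; apply: big1 => q /eqP q_succ.
  by rewrite (_ : q = Ordinal d_inner) ?gap0 ?subrr ?expr0n //; apply: val_inj.
by right; exists t; rewrite T0_t t_T1 (edge_crosses_cut (p := p) (q := q)) ?pd.
Qed.

End Cuts.

Section QuantizedConsensus.
Variables (R : realType) (n Q : nat) (eta : R) (A : nat -> 'M[R]_n) (x : nat -> 'I_n -> R).
Hypotheses (Q_gt0 : (0 < Q)%N) (x0_grid : forall i, on_grid Q (x 0%N i))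
  (x_step : forall k i, x k.+1 i = qfloor Q (\sum_j A k i j * x k j))
  (A_ds : forall k, doubly_stochastic (A k)) (A_diag : forall k i, 0 < A k i i)
  (eta_gt0 : 0 < eta) (A_eta : forall k i j, 0 < A k i j -> eta <= A k i j).

Lemma x_on_grid t i : on_grid Q (x t i).
Proof. by case: t => [|t]; [exact: x0_grid|rewrite x_step; exact: qfloor_on_grid]. Qed.

Lemma Vlow_step_ge_dispersion t : dispersion (A t) (x t) <= Vlow (x t) - Vlow (x t.+1).
Proof. exact: Vlow_quantized_step (A_ds t) (@x_on_grid t) (x_step t). Qed.

Lemma cut_sides_persist s (p : 'I_n) T0 t :
  sorted_by (x T0) s -> (T0 <= t)%N ->
  (forall t', (T0 <= t' < t)%N -> ~~ crosses_cut (A t') s p) ->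
  (forall u, ((s^-1)%g u <= p)%N -> x T0 (s p) <= x t u) /\
  (forall u (q : 'I_n), val q = (val p).+1 -> (p < (s^-1)%g u)%N -> x t u <= x T0 (s q)).
Proof.
move=> x_sorted /subnKC <-; elim: (t - T0)%N => [|m IH] no_cross.
  rewrite addn0; split=> [u u_top|u q q_succ u_bot]; rewrite -(permKV s u).
    exact: x_sorted.
  by apply: x_sorted; rewrite q_succ.
have [top bot] : (forall u, ((s^-1)%g u <= p)%N -> x T0 (s p) <= x (T0 + m) u) /\
    (forall u (q : 'I_n), val q = (val p).+1 -> (p < (s^-1)%g u)%N ->
       x (T0 + m) u <= x T0 (s q)).
  by apply: IH => t' /andP [T0_t' t'_lt]; apply: no_cross; rewrite T0_t' addnS ltnW.
have stay : ~~ crosses_cut (A (T0 + m)%N) s p.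
  by apply: no_cross; rewrite leq_addr addnS ltnSn.
have [A_ge0 [A_row _]] := A_ds (T0 + m).
rewrite addnS; split=> [u u_top|u q q_succ u_bot]; rewrite x_step.
  apply: qfloor_ge_grid => //; first exact: x_on_grid.
  apply: (avg_ge (A_ge0 u) (A_row u)) => j A_pos; apply: top.
  by rewrite -(no_crossing_same_side stay A_pos).
apply: le_trans (qfloor_le _ Q_gt0) _; apply: (avg_le (A_ge0 u) (A_row u)) => j A_pos.
by apply: (bot _ _ q_succ); rewrite ltnNge -(no_crossing_same_side stay A_pos) -ltnNge.
Qed.

Lemma first_crossing_in_row_range s (p q : 'I_n) T0 t i (lo hi : R) :
  sorted_by (x T0) s -> (T0 <= t)%N ->
  first_crossing A s T0 t p -> row_crosses_cut (A t) s p i -> val q = (val p).+1 ->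
  (forall j, 0 < A t i j -> lo <= x t j) -> (forall j, 0 < A t i j -> x t j <= hi) ->
  lo <= x T0 (s q) /\ x T0 (s p) <= hi.
Proof.
move=> x_sorted T0_t first /existsP [j /andP [A_ij]] sep q_succ lo_le le_hi.
have [top bot] := cut_sides_persist x_sorted T0_t (fun t' => first_hit_before first).
move: sep; rewrite /cut_separates; case: leqP => i_side /=.
  rewrite eq_sym eqb_id -ltnNge => j_side.
  by split; [apply: le_trans (lo_le _ A_ij) (bot _ _ q_succ j_side)
            |apply: le_trans (top _ i_side) (le_hi _ (A_diag t i))].
rewrite eq_sym eqbF_neg negbK => j_side.
by split; [apply: le_trans (lo_le _ (A_diag t i)) (bot _ _ q_succ i_side)
          |apply: le_trans (top _ j_side) (le_hi _ A_ij)].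
Qed.

Lemma first_crossings_le_dispersion s T0 t :
  sorted_by (x T0) s -> (T0 <= t)%N ->
  eta / 2 * \sum_p (if first_crossing A s T0 t p then sq_gap (x T0) s p else 0) <=
  dispersion (A t) (x t).
Proof.
move=> x_sorted T0_t; set first := first_crossing A s T0 t.
have charge_rows : \sum_p (if first p then sq_gap (x T0) s p else 0) <=
    \sum_i \sum_p (if first p && row_crosses_cut (A t) s p i then sq_gap (x T0) s p else 0).
  rewrite exchange_big; apply: ler_sum => p _.
  have rows_ge0 (P : pred 'I_n) : 0 <= \sum_(i | P i)
      (if first p && row_crosses_cut (A t) s p i then sq_gap (x T0) s p else 0).
    by apply: sumr_ge0 => i _; case: ifP; rewrite ?sq_gap_ge0.
  case first_p: (first p) rows_ge0 => rows_ge0; last exact: (rows_ge0 predT).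
  have [i row_i] := existsP (andP first_p).1.
  by rewrite (bigD1 i) //= row_i lerDl; apply: rows_ge0.
apply: le_trans (ler_wpM2l _ charge_rows) _; first by rewrite divr_ge0 ?ltW.
rewrite mulr_sumr; apply: ler_sum => i _.
have [A_ge0 [_ _]] := A_ds t.
have [a A_ia a_max] := arg_maxP (P := fun j => 0 < A t i j) (x t) (A_diag t i).
have [b A_ib b_min] := arg_minP (P := fun j => 0 < A t i j) (x t) (A_diag t i).
pose v p := x T0 (s p).
apply: le_trans (sum_sq_dev_ge_gap (A_ge0 i) _ (x t) (ltW eta_gt0)
                   (A_eta A_ia) (A_eta A_ib)).
apply: ler_wpM2l; first by rewrite divr_ge0 ?ltW.
apply: le_trans (sum_sq_gaps_within_le (v := v) _ (b_min _ A_ia)); last first.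
  by move=> p q; apply: x_sorted.
apply: ler_sum => p _; case: ifP => [/andP [first_p row_i]|_]; last first.
  by apply: sumr_ge0 => q _; case: ifP; rewrite ?sqr_ge0.
apply: ler_sum => q /eqP q_succ.
by have [-> ->] := first_crossing_in_row_range x_sorted T0_t first_p row_i q_succ b_min a_max.
Qed.

End QuantizedConsensus.

Unset Implicit Arguments.
Theorem lemma7 (R : realType) (n : nat) (eta : R) (B Q : nat)
  (A : nat -> 'M[R]_n) (x : nat -> 'I_n -> R) :
  0 < eta -> (1 <= B)%N -> (1 <= Q)%N ->
  (forall i, exists z : int, x 0%N i = z%:~R / Q%:R) ->
  (forall k i, x k.+1 i = qfloor Q (\sum_(j < n) A k i j * x k j)) ->
  (* (i) *)
  (forall k, doubly_stochastic (A k)) ->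
  (forall k i, 0 < A k i i) ->
  (forall k i j, 0 < A k i j -> eta <= A k i j) ->
  (* (ii) *)
  (forall (k : nat) (s : 'S_n), sorted_by (x (k * B)%N) s ->
     forall d d' : 'I_n, val d' = (val d).+1 ->
       x (k * B)%N (s d) = x (k * B)%N (s d') \/
       exists t : nat, (k * B <= t)%N /\ (t < k.+1 * B)%N /\
         exists p q : 'I_n, (p <= d)%N /\ (d < q)%N /\
           (in_edges (A t) (s p, s q) \/ in_edges (A t) (s q, s p))) ->
  forall (k : nat) (s : 'S_n), sorted_by (x (k * B)%N) s ->
    Vlow (x (k * B)%N) - Vlow (x (k.+1 * B)%N) >=
      eta / 2 * \sum_(p < n) \sum_(q < n | val q == (val p).+1)
         (x (k * B)%N (s p) - x (k * B)%N (s q)) ^+ 2.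
Proof.
move=> eta_gt0 _ Q_gt0 x0 x_step A_ds A_diag A_eta connected k s x_sorted.
have window_end : (k.+1 * B = k * B + B)%N by rewrite mulSn addnC.
have telescope : Vlow (x (k * B)%N) - Vlow (x (k.+1 * B)%N) =
    \sum_(k * B <= t < k * B + B) (Vlow (x t) - Vlow (x t.+1)).
  rewrite window_end (@telescope_sumr_eq _ _ _ (fun t => - Vlow (x t))) ?leq_addr //.
    by rewrite opprK addrC.
  by move=> t _; rewrite opprK addrC.
rewrite telescope.
apply: le_trans (ler_sum_nat (fun t _ => Vlow_step_ge_dispersion Q_gt0 x0 x_step A_ds t)).
apply: le_trans (ler_sum_nat (fun t t_in =>
  first_crossings_le_dispersion Q_gt0 x0 x_step A_ds A_diag eta_gt0 A_eta
    x_sorted (andP t_in).1)).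
rewrite -mulr_sumr; apply: ler_wpM2l; first by rewrite divr_ge0 ?ltW.
rewrite exchange_big /=.
apply: ler_sum => p _; rewrite -/(sq_gap _ s p).
have := connected k s x_sorted p; rewrite window_end.
case/sq_gap_eq0_or_crossed => [->|crossed].
  by apply: sumr_ge0 => t _; case: ifP; rewrite ?sq_gap_ge0.
exact: le_sum_first_hit (sq_gap_ge0 _ _ _) crossed.
Qed.
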